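(* Let $R$ be a commutative ring with identity, $n>1$, $S=M_n(R)$. Let $A_1,A_2$ be vertices of the orthogonality graph $O(S)$, and let $c_1,c_2\in R$ be nonzero elements with $c_i\det A_i=0$ ($i=1,2$) and $c_1c_2=0$. Then $d(A_1,A_2)\le 3$.
   Context: The orthogonality graph $O(S)$ of a ring $S$ is the undirected graph whose vertices are the nonzero two-sided zero-divisors of $S$, distinct vertices $x,y$ being adjacent iff $xy=yx=0$; $d$ is the graph distance. *)

From HB Require Import structures.
From mathcomp Require Import all_boot all_order all_algebra.
Set Implicit Arguments. Unset Strict Implicit. Unset Printing Implicit Defensive.
Import GRing.Theory.
Local Open Scope ring_scope.

Definition OVertex (R : comNzRingType) (n : nat) (A : 'M[R]_n) : Prop :=
  A != 0 /\ (exists B : 'M[R]_n, B != 0 /\ A *m B = 0)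
         /\ (exists C : 'M[R]_n, C != 0 /\ C *m A = 0).

Definition OAdj (R : comNzRingType) (n : nat) (A B : 'M[R]_n) : Prop :=
  OVertex A /\ OVertex B /\ A != B /\ A *m B = 0 /\ B *m A = 0.

Fixpoint ODistLe (R : comNzRingType) (n : nat) (k : nat) (A B : 'M[R]_n) : Prop :=
  match k with
  | 0%N => A = B
  | k'.+1 => ODistLe k' A B \/ exists Z : 'M[R]_n, OAdj A Z /\ ODistLe k' Z B
  end.

From Stdlib Require Import Classical.
From HB Require Import structures.
From mathcomp Require Import all_boot all_order all_algebra perm.
Set Implicit Arguments. Unset Strict Implicit. Unset Printing Implicit Defensive.
Import GRing.Theory.
Local Open Scope ring_scope.

(* If c != 0 kills det A, McCoy's theorem gives a nonzero column x in c R^n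
   with A x = 0; applying McCoy once more, to A^T and the annihilator of x,
   gives a row y with x y != 0 and x y A = 0.  So X := x y is a nonzero
   two-sided annihilator of A lying in c M_n(R).  For the two matrices this
   yields X1 in c1 M_n(R) and X2 in c2 M_n(R), which are orthogonal because
   c1 c2 = 0, hence the walk A1 - X1 - X2 - A2. *)

Section Annihilators.
Variable R : comNzRingType.

(* Laplace expansion of the minor with row r put on top of the rows f. *)
Lemma mulmx_signed_minors m n (A : 'M[R]_(m, n.+1)) (f : 'I_n -> 'I_m)
    (r : 'I_m) :
  let u := \col_(j < n.+1) ((-1) ^+ j * \det (col' j (rowsub f A))) in
  (A *m u) r ord0
  = \det (rowsub (fun i => if unlift ord0 i is Some k then f k else r) A).
Proof.
rewrite /= (expand_det_row _ ord0) mxE; apply: eq_bigr => j _.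
rewrite !mxE /cofactor unlift_none /= add0n; congr (_ * (_ * \det _)).
by apply/matrixP => a b; rewrite !mxE liftK.
Qed.

(* McCoy's theorem is the case I := (eq 0).  The proof only uses that I
   respects equality, so I may be any predicate; below it is also taken to
   be the annihilator of a vector. *)
Lemma mccoy (I : R -> Prop) k m (A : 'M[R]_(m, k)) (c : R) :
  ~ I c -> (forall g : 'I_k -> 'I_m, I (c * \det (rowsub g A))) ->
  exists2 u : 'cV[R]_k,
    forall i, I (c * (A *m u) i ord0) & exists j, ~ I (c * u j ord0).
Proof.
move=> Ic; elim: k A => [|n IHn] A minorsA.
  have := minorsA (fun i => match i with Ordinal _ h => False_rect _ (notF h) end).
  by rewrite det_mx00 mulr1.
have [minors' | /not_all_ex_not [f If]] :=
  classic (forall g : 'I_n -> 'I_m, I (c * \det (rowsub g (col' ord0 A)))).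
  have [u' Au' [j Ij]] := IHn _ minors'.
  exists (\col_j (if unlift ord0 j is Some k then u' k ord0 else 0)); last first.
    by exists (lift ord0 j); rewrite mxE liftK.
  move=> i; have := Au' i; congr (I (c * _)).
  rewrite !mxE big_ord_recl !mxE unlift_none mulr0 add0r.
  by apply: eq_bigr => j' _; rewrite !mxE liftK.
exists (\col_j ((-1) ^+ j * \det (col' j (rowsub f A)))).
  by move=> r; rewrite mulmx_signed_minors.
exists ord0; rewrite mxE expr0 mul1r; congr (~ I (c * \det _)): If.
by apply/matrixP => a b; rewrite !mxE.
Qed.

Lemma det_rowsub_square n (A : 'M[R]_n) (g : 'I_n -> 'I_n) :
  exists s : R, \det (rowsub g A) = s * \det A.
Proof.
have [/injectiveP g_inj | /injectivePn [x [y nxy gxy]]] := boolP (injectiveb g).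
  exists ((-1) ^+ perm g_inj).
  have -> : rowsub g A = row_perm (perm g_inj) A.
    by apply/matrixP => a b; rewrite !mxE permE.
  by rewrite row_permE det_mulmx det_perm.
exists 0; rewrite mul0r; apply: (determinant_alternate nxy) => j.
by rewrite !mxE gxy.
Qed.

Lemma ann_det_ann_minors n (A : 'M[R]_n) (c : R) :
  c * \det A = 0 -> forall g : 'I_n -> 'I_n, c * \det (rowsub g A) = 0.
Proof.
by move=> cA g; have [s ->] := det_rowsub_square A g; rewrite mulrCA cA mulr0.
Qed.

Lemma scaled_kernel_vector n (A : 'M[R]_n) (c : R) :
  c != 0 -> c * \det A = 0 ->
  exists u : 'cV[R]_n, c *: u != 0 /\ A *m (c *: u) = 0.
Proof.
move=> /eqP c0 cA.
have [u Au [j cu]] := mccoy (I := eq^~ 0) c0 (ann_det_ann_minors cA).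
exists u; split; first by apply/matrix0Pn; exists j, ord0; rewrite mxE; apply/eqP.
by apply/matrixP => i k; rewrite (ord1 k) -scalemxAr mxE [RHS]mxE; exact: Au.
Qed.

Lemma det_scale_kernel n (A : 'M[R]_n) (x : 'cV[R]_n) :
  A *m x = 0 -> \det A *: x = 0.
Proof. by move=> Ax; rewrite -mul_scalar_mx -mul_adj_mx -mulmxA Ax mulmx0. Qed.

Lemma left_annihilator_rank_one n (A : 'M[R]_n) (x : 'cV[R]_n) :
  x != 0 -> A *m x = 0 ->
  exists y : 'rV[R]_n, x *m y != 0 /\ x *m y *m A = 0.
Proof.
move=> x0 Ax.
have not_ann1 : ~ (1 *: x = 0) by rewrite scale1r; apply/eqP.
have ann_minors (g : 'I_n -> 'I_n) : 1 * \det (rowsub g A^T) *: x = 0.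
  have [s ->] := det_rowsub_square A^T g.
  by rewrite mul1r det_tr -scalerA det_scale_kernel ?scaler0.
have [w Aw [l wl]] := mccoy (I := fun r => r *: x = 0) not_ann1 ann_minors.
exists w^T; split.
  have /matrix0Pn [i [k]] : 1 * w l ord0 *: x != 0 by apply/eqP.
  rewrite (ord1 k) mul1r mxE => xwl; apply/matrix0Pn; exists i, l.
  by rewrite !mxE big_ord1 mxE mulrC.
apply/matrixP => i j; rewrite -mulmxA -[w^T *m A]trmxK trmx_mul trmxK.
rewrite !mxE big_ord1 !mxE mulrC.
by have /matrixP /(_ i ord0) := Aw j; rewrite mul1r !mxE.
Qed.

Lemma scaled_two_sided_annihilator n (A : 'M[R]_n) (c : R) :
  c != 0 -> c * \det A = 0 ->
  exists U : 'M[R]_n, c *: U != 0 /\ A *m (c *: U) = 0 /\ c *: U *m A = 0.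
Proof.
move=> c0 cA; have [u [x0 Ax]] := scaled_kernel_vector c0 cA.
have [y [xy0 xyA]] := left_annihilator_rank_one x0 Ax.
by exists (u *m y); rewrite scalemxAl mulmxA Ax mul0mx.
Qed.

End Annihilators.

Section OrthogonalityGraph.
Variables (R : comNzRingType) (n : nat).
Implicit Types X Y B : 'M[R]_n.

Lemma orth_OVertex X Y :
  X != 0 -> Y != 0 -> X *m Y = 0 -> Y *m X = 0 -> OVertex X.
Proof. by move=> X0 Y0 XY YX; split=> //; split; exists Y. Qed.

Lemma ODistLe_orth k X Y B :
  X != 0 -> Y != 0 -> X *m Y = 0 -> Y *m X = 0 ->
  ODistLe k Y B -> ODistLe k.+1 X B.
Proof.
move=> X0 Y0 XY YX YB; have [-> | XneY] := eqVneq X Y; first by left.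
right; exists Y; split=> //; split; first exact: orth_OVertex X0 Y0 XY YX.
by split; first exact: orth_OVertex Y0 X0 YX XY.
Qed.

End OrthogonalityGraph.

Theorem lemma3 (R : comNzRingType) (n : nat) (hn : (1 < n)%N)
    (A1 A2 : 'M[R]_n) (c1 c2 : R) :
  OVertex A1 -> OVertex A2 ->
  c1 != 0 -> c2 != 0 ->
  c1 * \det A1 = 0 -> c2 * \det A2 = 0 -> c1 * c2 = 0 ->
  ODistLe 3 A1 A2.
Proof.
move=> [A1_0 _] [A2_0 _] c1_0 c2_0 c1A1 c2A2 c12.
have [U1 [X1_0 [A1X1 X1A1]]] := scaled_two_sided_annihilator c1_0 c1A1.
have [U2 [X2_0 [A2X2 X2A2]]] := scaled_two_sided_annihilator c2_0 c2A2.
have X1X2 : c1 *: U1 *m (c2 *: U2) = 0.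
  by rewrite -scalemxAl -scalemxAr scalerA c12 scale0r.
have X2X1 : c2 *: U2 *m (c1 *: U1) = 0.
  by rewrite -scalemxAl -scalemxAr scalerA mulrC c12 scale0r.
apply: (ODistLe_orth A1_0 X1_0 A1X1 X1A1).
apply: (ODistLe_orth X1_0 X2_0 X1X2 X2X1).
exact: (ODistLe_orth (k := 0) X2_0 A2_0 X2A2 A2X2).
Qed.
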